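(* Let $F$ be the elementary cellular automaton with rule number 184. Then $D(\textsc{Pred}_{F,n})=\Theta(\log n)$: there is a protocol using $O(\log n)$ bits, and no protocol uses asymptotically fewer.
   Context: An elementary cellular automaton (ECA) with rule number $N\in\{0,\dots,255\}$ is the map $F:\{0,1\}^{\mathbb Z}\to\{0,1\}^{\mathbb Z}$ given by $F(x)_i=f(x_{i-1},x_i,x_{i+1})$. Here the local rule $f:\{0,1\}^3\to\{0,1\}$ is determined by $N=\sum_{a,b,c\in\{0,1\}}2^{4a+2b+c}f(a,b,c)$. On a finite word of length $m\ge 3$, $F$ produces the word of length $m-2$ obtained by applying $f$ at every position whose full neighbourhood lies in the word. For $n\ge1$, $\textsc{Pred}_{F,n}:\{0,1\}^{2n+1}\to\{0,1\}$ maps a word $x=x_{-n}\cdots x_n$ to the single letter of $F^n(x)$, i.e. the state of the central cell after $n$ steps. For a function $g:X\times Y\to Z$, $D(g)$ is the minimal depth of a deterministic two-party protocol computing $g$. In such a protocol, Alice knows $x$ and Bob knows $y$. The protocol is a binary tree: each internal node is labelled by a function of Alice's input only or of Bob's input only, with values in $\{\text{left},\text{right}\}$, and each leaf is labelled by an output value. For $g:\{0,1\}^m\to Z$, set $D(g)=\max_{0\le i<m}D(g_i)$, where $g_i:\{0,1\}^i\times\{0,1\}^{m-i}\to Z$ is $g_i(x,y)=g(xy)$. *)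

From mathcomp Require Import all_boot.
Set Implicit Arguments. Unset Strict Implicit. Unset Printing Implicit Defensive.

Definition eca_local (N : nat) (a b c : bool) : bool :=
  odd (N %/ 2 ^ (4 * a + 2 * b + c)).

(* One step of F on a finite word: length m >= 3 gives length m-2
   (applying f at every position whose full neighbourhood lies in the word). *)
Fixpoint eca_step (N : nat) (w : seq bool) : seq bool :=
  match w with
  | a :: ((b :: c :: _) as t) => eca_local N a b c :: eca_step N t
  | _ => [::]
  end.

(* Pred_{F,n}: on a word of length 2n+1, the single letter of F^n(x). *)
Definition Pred (N n : nat) (x : seq bool) : bool :=
  head false (iter n (eca_step N) x).

(* Deterministic two-party protocols (binary trees); a node query returning
   true means "left". *)
Inductive protocol (X Y Z : Type) : Type :=
  | Leaf of Z
  | AliceNode of (X -> bool) & protocol X Y Z & protocol X Y Z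
  | BobNode of (Y -> bool) & protocol X Y Z & protocol X Y Z.

Arguments Leaf {X Y Z}.
Arguments AliceNode {X Y Z}.
Arguments BobNode {X Y Z}.

Fixpoint run (X Y Z : Type) (P : protocol X Y Z) (x : X) (y : Y) : Z :=
  match P with
  | Leaf z => z
  | AliceNode q l r => if q x then run l x y else run r x y
  | BobNode q l r => if q y then run l x y else run r x y
  end.

Fixpoint depth (X Y Z : Type) (P : protocol X Y Z) : nat :=
  match P with
  | Leaf _ => 0
  | AliceNode _ l r => (maxn (depth l) (depth r)).+1
  | BobNode _ l r => (maxn (depth l) (depth r)).+1
  end.

Definition computes_cut (Z : Type) (g : seq bool -> Z) (m i : nat)
    (P : protocol (seq bool) (seq bool) Z) : Prop :=
  forall x y, size x = i -> size y = m - i -> run P x y = g (x ++ y).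

(* D(g) = max_{0<=i<m} D(g_i), D(g_i) = min depth of a protocol computing g_i.
   "D(g) <= d" and "d <= D(g)" unfolded: *)
Definition D_le (Z : Type) (g : seq bool -> Z) (m d : nat) : Prop :=
  forall i, i < m -> exists P, computes_cut g m i P /\ depth P <= d.

Definition D_ge (Z : Type) (g : seq bool -> Z) (m d : nat) : Prop :=
  exists i, i < m /\ forall P, computes_cut g m i P -> d <= depth P.

From mathcomp Require Import all_boot.
From mathcomp Require Import zify.

(* Rule 184 is the traffic rule: a 1 advances iff the cell ahead is empty.  In
   terms of the counting function P(j) = number of ones among the first j
   letters, n steps are described by the max-plus formula
   H_n(p) = max_{s <= n} P(p + 2s) + n - s, the central cell of F^n being 1 iff
   H_n(0) < H_n(1).  The counting function of x ++ y is the maximum of one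
   depending on x only and one depending on y (and |x|, #ones x), and H_n
   commutes with maxima; so Alice sends H_n(0), H_n(1) for her part and her
   number of ones, O(log n) bits, and Bob concludes.  Conversely, at the central
   cut the words 1^(2a) 0^(n-2a) . 0^b 1^(n+1-b), 2a <= n, give 1 when a = b and
   0 when a < b: a fooling set of size about n/2. *)

Definition prefix_ones (w : seq bool) (j : nat) : nat := count id (take j w).

(* H_t of the max-plus formula, computed by the recursion
   H_(t+1)(p) = max (H_t(p) + 1) (H_t(p + 2)). *)
Fixpoint height (F : nat -> nat) (t p : nat) : nat :=
  match t with
  | 0 => F p
  | t'.+1 => maxn (height F t' p).+1 (height F t' p.+2)
  end.

Definition unit_steps (F : nat -> nat) : Prop := forall p, F p <= F p.+1 <= (F p).+1.

Lemma eca_local184 a b c : eca_local 184 a b c = if b then c else a.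
Proof. by case: a; case: b; case: c. Qed.

Lemma size_eca_step N w : size (eca_step N w) = size w - 2.
Proof.
elim: w => [|a t IH] //=.
by case: t IH => [|b [|c t]] IH //=; rewrite IH /=; lia.
Qed.

Lemma size_iter_eca_step N t w : size (iter t (eca_step N) w) = size w - 2 * t.
Proof. by elim: t => [|t IH] /=; rewrite ?subn0 // size_eca_step IH; lia. Qed.

Lemma nth_eca_step N w k : k + 2 < size w ->
  nth false (eca_step N w) k =
  eca_local N (nth false w k) (nth false w k.+1) (nth false w k.+2).
Proof.
elim: w k => [|a t IH] k //=.
case: t IH => [|b [|c t]] IH //=; try lia.
by case: k => [|k] //= hk; rewrite IH //=; lia.
Qed.

Lemma prefix_onesS w j : prefix_ones w j.+1 = prefix_ones w j + nth false w j.
Proof.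
rewrite /prefix_ones; case: (ltnP j (size w)) => hj.
  by rewrite (take_nth false hj) -cats1 count_cat /= addn0.
by rewrite !take_oversize ?nth_default ?addn0 //; lia.
Qed.

Lemma prefix_ones_unit_steps w : unit_steps (prefix_ones w).
Proof. by move=> j; rewrite prefix_onesS; case: nth; lia. Qed.

Lemma height_unit_steps F t : unit_steps F -> unit_steps (height F t).
Proof.
move=> hF; elim: t => [|t IH] p //=.
by have := IH p; have := IH p.+1; have := IH p.+2; lia.
Qed.

Lemma eca_local184_increments A0 A1 A2 A3 :
  A0 <= A1 <= A0.+1 -> A1 <= A2 <= A1.+1 -> A2 <= A3 <= A2.+1 ->
  eca_local 184 (A0 < A1) (A1 < A2) (A2 < A3) = (maxn A0.+1 A2 < maxn A1.+1 A3).
Proof.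
move=> h1 h2 h3; rewrite eca_local184.
case: (ltnP A1 A2) => h4; case: (ltnP A2 A3) => h5; case: (ltnP A0 A1) => h6.
all: first [ symmetry; apply/idP; lia | symmetry; apply/negbTE; rewrite -leqNgt; lia ].
Qed.

Lemma nth_iter_rule184 w t k : k + 2 * t < size w ->
  nth false (iter t (eca_step 184) w) k =
  (height (prefix_ones w) t k < height (prefix_ones w) t k.+1).
Proof.
have steps t' := @height_unit_steps _ t' (prefix_ones_unit_steps w).
elim: t k => [|t IH] k hk /=.
  by rewrite prefix_onesS; case: nth; lia.
rewrite nth_eca_step; last by rewrite size_iter_eca_step; lia.
rewrite !IH; try lia.
by rewrite eca_local184_increments ?(steps t).
Qed.

Lemma Pred184_height n w : size w = (2 * n).+1 ->
  Pred 184 n w = (height (prefix_ones w) n 0 < height (prefix_ones w) n 1).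
Proof. by move=> hw; rewrite /Pred -nth0 nth_iter_rule184 // hw; lia. Qed.

Lemma eq_height F G t p : F =1 G -> height F t p = height G t p.
Proof. by move=> eFG; elim: t p => [|t IH] p /=; rewrite ?IH. Qed.

Lemma height_max F G t p :
  height (fun j => maxn (F j) (G j)) t p = maxn (height F t p) (height G t p).
Proof. by elim: t p => [|t IH] p //=; rewrite !IH; lia. Qed.

Lemma height_ge F t p s : s <= t -> F (p + 2 * s) + (t - s) <= height F t p.
Proof.
elim: t p s => [|t IH] p [|s] //= hs; rewrite ?addn0 ?muln0 ?subn0 //.
  by have := IH p 0 isT; rewrite muln0 addn0 subn0; lia.
have := IH p.+2 s hs; rewrite subSS; have -> : p.+2 + 2 * s = p + 2 * s.+1 by lia.
lia.
Qed.

Lemma height_le F t p B :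
  (forall s, s <= t -> F (p + 2 * s) + (t - s) <= B) -> height F t p <= B.
Proof.
elim: t p B => [|t IH] p B hB /=.
  by have := hB 0 isT; rewrite muln0 !addn0.
rewrite geq_max; apply/andP; split.
  have : height F t p <= B.-1 by apply: IH => s hs; have := hB s (leqW hs); lia.
  by have := hB 0 isT; rewrite muln0 addn0 subn0; lia.
apply: IH => s hs; have := hB s.+1 hs; rewrite subSS.
by have -> : p.+2 + 2 * s = p + 2 * s.+1 by lia.
Qed.

Section AliceSends.
Variables X Y Z : Type.

(* Alice announces the [b] low bits of [a x], least significant last; the
   protocol then continues as [F (a x)]. *)
Fixpoint alice_sends (b : nat) (a : X -> nat) (F : nat -> protocol X Y Z) :
    protocol X Y Z :=
  match b with
  | 0 => F 0
  | b'.+1 => alice_sends b' (fun x => (a x)./2)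
               (fun k => AliceNode (fun x => odd (a x)) (F k.*2.+1) (F k.*2))
  end.

Lemma run_alice_sends b a F x y :
  a x < 2 ^ b -> run (alice_sends b a F) x y = run (F (a x)) x y.
Proof.
elim: b a F => [|b IH] a F /=; first by rewrite expn0 ltnS leqn0 => /eqP ->.
move=> hb; rewrite IH /=; last by rewrite -divn2 ltn_divLR // -expnSr.
by rewrite -[in RHS](odd_double_half (a x)); case: odd.
Qed.

Lemma depth_alice_sends b a F d :
  (forall k, depth (F k) <= d) -> depth (alice_sends b a F) <= b + d.
Proof.
elim: b a F d => [|b IH] a F d hF /=; first exact: hF.
rewrite addSnnS; apply: IH => k /=.
by rewrite ltnS geq_max !hF.
Qed.
End AliceSends.
Arguments alice_sends {X Y Z}.

Definition alice_prefix (x : seq bool) (j : nat) : nat :=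
  if j <= size x then prefix_ones x j else 0.

Definition bob_prefix (i c : nat) (y : seq bool) (j : nat) : nat :=
  if i <= j then c + prefix_ones y (j - i) else 0.

Lemma prefix_ones_cat x y j : prefix_ones (x ++ y) j =
  maxn (alice_prefix x j) (bob_prefix (size x) (count id x) y j).
Proof.
rewrite /alice_prefix /bob_prefix /prefix_ones take_cat.
case: ltnP => hj; first by rewrite (ltnW hj) maxn0.
rewrite count_cat; case: leqP => hjx; last by rewrite max0n.
have -> : j = size x by apply/eqP; rewrite eqn_leq hjx hj.
by rewrite take_size subnn take0 addn0 maxnn.
Qed.

Definition bob_answer (n i k0 k1 c : nat) (y : seq bool) : bool :=
  maxn k0 (height (bob_prefix i c y) n 0) < maxn k1 (height (bob_prefix i c y) n 1).

Definition rule184_protocol (b n i : nat) : protocol (seq bool) (seq bool) bool :=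
  alice_sends b (fun x => height (alice_prefix x) n 0) (fun k0 =>
  alice_sends b (fun x => height (alice_prefix x) n 1) (fun k1 =>
  alice_sends b (count id) (fun c =>
  BobNode (bob_answer n i k0 k1 c) (Leaf true) (Leaf false)))).

Lemma depth_rule184_protocol b n i : depth (rule184_protocol b n i) <= 3 * b + 1.
Proof.
have -> : 3 * b + 1 = b + (b + (b + 1)) by lia.
by do 3 apply: depth_alice_sends => ?.
Qed.

Lemma run_rule184_protocol b n x y :
  size x <= 2 * n -> size (x ++ y) = (2 * n).+1 -> 3 * n < 2 ^ b ->
  run (rule184_protocol b n (size x)) x y = Pred 184 n (x ++ y).
Proof.
move=> hx hxy hb.
have count_x : count id x <= 2 * n by apply: leq_trans (count_size _ _) _.
have height_x p : height (alice_prefix x) n p < 2 ^ b.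
  apply: leq_ltn_trans (@height_le _ n p (count id x + n) _) _; last by lia.
  move=> s _; rewrite /alice_prefix; case: ifP => _; last by lia.
  by rewrite /prefix_ones -[in count id x](cat_take_drop (p + 2 * s) x) count_cat; lia.
rewrite /rule184_protocol !run_alice_sends //= ?Pred184_height //; last by lia.
rewrite !(eq_height _ _ _ _ (prefix_ones_cat x y)) !height_max /bob_answer.
by case: (_ < _).
Qed.

Lemma rule184_upper_bound n i : 1 < n -> i < 2 * n + 1 ->
  exists P, computes_cut (Pred 184 n) (2 * n + 1) i P /\
            depth P <= 13 * trunc_log 2 n.
Proof.
move=> hn hi; set t := trunc_log 2 n.
have ht : n < 2 ^ t.+1 by apply: trunc_log_ltn.
have t_pos : 0 < t by case: t ht => [|t'] //; rewrite expn1; lia.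
exists (rule184_protocol (t + 3) n i); split.
  move=> x y hx hy; rewrite -hx run_rule184_protocol ?size_cat //; try lia.
  by rewrite expnD expnS in ht *; lia.
by apply: leq_trans (depth_rule184_protocol _ _ _) _; lia.
Qed.

Lemma size_filter_split T (p : pred T) (L : seq T) d1 d2 :
  size (filter p L) <= 2 ^ d1 -> size (filter (predC p) L) <= 2 ^ d2 ->
  size L <= 2 ^ (maxn d1 d2).+1.
Proof.
rewrite -(count_predC p L) -!size_filter expnS mul2n -addnn => h1 h2.
apply: leq_add; [apply: leq_trans h1 _ | apply: leq_trans h2 _].
  by rewrite leq_exp2l ?leq_maxl.
by rewrite leq_exp2l ?leq_maxr.
Qed.

Section FoolingSet.
Variables (X Y : Type) (xs : nat -> X) (ys : nat -> Y).

Definition fooling_set (P : protocol X Y bool) (L : seq nat) : Prop :=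
  {in L &, forall a b, a <= b -> run P (xs a) (ys b) = (a == b)}.

Lemma fooling_set_filter P P' (p : pred nat) L :
  {in filter p L &, forall a b, run P' (xs a) (ys b) = run P (xs a) (ys b)} ->
  fooling_set P L -> fooling_set P' (filter p L).
Proof.
move=> eP fP a b ha hb hab.
have sub : {subset filter p L <= L} by move=> c; rewrite mem_filter => /andP[].
by rewrite eP // fP // sub.
Qed.

Lemma fooling_set_leaf z L : uniq L -> fooling_set (Leaf z) L -> size L <= 1.
Proof.
case: L => [|a [|b L]] //= /andP[]; rewrite inE negb_or => /andP[neq_ab _] _ fL.
have ina : a \in [:: a, b & L] by rewrite inE eqxx.
have inb : b \in [:: a, b & L] by rewrite !inE eqxx orbT.
have [lt_ab|lt_ba|eq_ab] := ltngtP a b; last by rewrite eq_ab eqxx in neq_ab.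
  move: (fL a a ina ina (leqnn a)) (fL a b ina inb (ltnW lt_ab)) => /= ->.
  by rewrite eqxx ltn_eqF.
move: (fL b b inb inb (leqnn b)) (fL b a inb ina (ltnW lt_ba)) => /= ->.
by rewrite eqxx ltn_eqF.
Qed.

Lemma fooling_set_size P L : uniq L -> fooling_set P L -> size L <= 2 ^ depth P.
Proof.
elim: P L => [z|q l IHl r IHr|q l IHl r IHr] L uL fL /=.
- exact: fooling_set_leaf fL.
- apply: (@size_filter_split nat (q \o xs)); [apply: IHl | apply: IHr];
    rewrite ?filter_uniq //; apply: fooling_set_filter fL => a b.
    by rewrite mem_filter /= => /andP[-> _].
  by rewrite mem_filter /= => /andP[/negbTE -> _].
- apply: (@size_filter_split nat (q \o ys)); [apply: IHl | apply: IHr];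
    rewrite ?filter_uniq //; apply: fooling_set_filter fL => a b _.
    by rewrite mem_filter /= => /andP[-> _].
  by rewrite mem_filter /= => /andP[/negbTE -> _].
Qed.
End FoolingSet.
Arguments fooling_set {X Y}.
Arguments fooling_set_size {X Y xs ys P L}.

Lemma prefix_ones_nseq_true k w j :
  prefix_ones (nseq k true ++ w) j = minn j k + prefix_ones w (j - k).
Proof.
rewrite /prefix_ones take_cat size_nseq; case: ltnP => hj.
  rewrite take_nseq ?(ltnW hj) // count_nseq (_ : j - k = 0) ?take0 /=; lia.
by rewrite count_cat count_nseq mul1n; congr (_ + _); lia.
Qed.

Lemma prefix_ones_nseq_false k w j :
  prefix_ones (nseq k false ++ w) j = prefix_ones w (j - k).
Proof.
rewrite /prefix_ones take_cat size_nseq; case: ltnP => hj.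
  by rewrite take_nseq ?(ltnW hj) // count_nseq (_ : j - k = 0) ?take0 /=; lia.
by rewrite count_cat count_nseq mul0n.
Qed.

Definition fool_left (n a : nat) : seq bool := nseq (2 * a) true ++ nseq (n - 2 * a) false.
Definition fool_right (n b : nat) : seq bool := nseq b false ++ nseq (n.+1 - b) true.

Lemma prefix_ones_fool n a b j : prefix_ones (fool_left n a ++ fool_right n b) j =
  minn j (2 * a) + minn (j - 2 * a - (n - 2 * a) - b) (n.+1 - b).
Proof.
rewrite -catA prefix_ones_nseq_true !prefix_ones_nseq_false.
by rewrite -[nseq _ true]cats0 prefix_ones_nseq_true /prefix_ones addn0.
Qed.

Lemma size_fool_left n a : 2 * a <= n -> size (fool_left n a) = n.
Proof. by rewrite size_cat !size_nseq; lia. Qed.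

Lemma size_fool_right n b : b <= n.+1 -> size (fool_right n b) = n.+1.
Proof. by rewrite size_cat !size_nseq; lia. Qed.

Lemma Pred184_fool n a b : 2 * a <= n -> 2 * b <= n -> a <= b ->
  Pred 184 n (fool_left n a ++ fool_right n b) = (a == b).
Proof.
move=> ha hb hab.
rewrite Pred184_height; last by rewrite size_cat size_fool_left ?size_fool_right; lia.
have [<-|neq_ab] := eqVneq a b; rewrite ?eqxx ?(negbTE neq_ab);
  set F := prefix_ones _; have F_val j : F j = _ := prefix_ones_fool _ _ _ j.
  have upper : height F n 0 <= n + a.
    by apply: height_le => s hs; rewrite F_val; lia.
  by have := @height_ge F n 1 n (leqnn n); rewrite F_val; lia.
have upper : height F n 1 <= n + a.
  by apply: height_le => s hs; rewrite F_val; lia.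
have a_le_n : a <= n by lia.
have := @height_ge F n 0 a a_le_n.
by rewrite F_val; lia.
Qed.

Lemma rule184_lower_bound n P : 0 < n ->
  computes_cut (Pred 184 n) (2 * n + 1) n P -> trunc_log 2 n <= depth P.
Proof.
move=> n_pos hP.
have fool : fooling_set (fool_left n) (fool_right n) P (iota 0 (n %/ 2).+1).
  move=> a b; rewrite !mem_iota /= => ha hb hab.
  rewrite hP ?Pred184_fool ?size_fool_left ?size_fool_right //; lia.
have := fooling_set_size (iota_uniq _ _) fool; rewrite size_iota => h.
have log_le : 2 ^ trunc_log 2 n <= n := trunc_logP (isT : 1 < 2) n_pos.
by rewrite -ltnS -(ltn_exp2l _ _ (isT : 1 < 2)) expnS; lia.
Qed.

Theorem mainTheorem19 :
  (exists C N0 : nat, forall n, N0 <= n ->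
      D_le (Pred 184 n) (2 * n + 1) (C * trunc_log 2 n)) /\
  (exists c N0 : nat, 0 < c /\ forall n, N0 <= n ->
      D_ge (Pred 184 n) (2 * n + 1) (trunc_log 2 n %/ c)).
Proof.
split.
  by exists 13, 2 => n hn i hi; apply: rule184_upper_bound.
exists 1, 1; split => // n hn; exists n; split; first by lia.
by move=> P hP; rewrite divn1; apply: rule184_lower_bound.
Qed.
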